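(* Fix positive integers $r,n,k$ and consider $\mathbb{C}^{rn}$ with a fixed basis indexed by $[r]\times[n]$. Let the torus $T=(\mathbb{C}^* )^n$ act on $\mathbb{C}^{rn}$ by letting $\mathbf{t}=(t_1,\dots,t_n)$ multiply the $(i,j)$-th coordinate by $t_j$, and consider the induced action on the Grassmannian $G(k,rn)$ of $k$-dimensional subspaces of $\mathbb{C}^{rn}$, embedded in $\mathbb{P}(\bigwedge^k\mathbb{C}^{rn})$ by the Plücker embedding. Let $p\in G(k,rn)$ and let $\mathcal{M}$ be the polymatroid associated with $p$. Then the lattice polytope representing the projective toric variety $\overline{Tp}$ is isomorphic to the base polytope of $\mathcal{M}$.
   Context: A polymatroid on a finite set $E$ is given by a rank function $r:\mathcal{P}(E)\to\mathbb{Z}_{\ge0}$ with $r(\emptyset)=0$, $r$ monotone ($Y\subseteq X\Rightarrow r(Y)\le r(X)$) and submodular ($r(X\cup Y)+r(X\cap Y)\le r(X)+r(Y)$). Its base polytope is $\{x\in\mathbb{R}_{\ge0}^E: x\cdot\mathbf{e}_U\le r(U)\ \forall U\subseteq E,\ x\cdot\mathbf{e}_E=r(E)\}$, where $\mathbf{e}_U$ is the indicator vector of $U$. The polymatroid associated with $p$: represent $p$ by a full-rank $k\times rn$ matrix $A$ whose rows span the subspace $p$; for $j\in[n]$ let $W_j\subseteq\mathbb{C}^k$ be the span of the $r$ columns of $A$ indexed by $(i,j)$, $i\in[r]$; then $\mathcal{M}$ is the polymatroid on $[n]$ with rank function $r(S)=\dim\sum_{j\in S}W_j$ (independent of the choice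 of $A$). The lattice polytope representing a projective toric variety given as the closure of a torus orbit parameterised by monomials is the convex hull of the exponent vectors of those monomials. *)

From HB Require Import structures.
From mathcomp Require Import all_boot all_order all_algebra.
From mathcomp Require Import reals.
From mathcomp Require Import complex.
Set Implicit Arguments. Unset Strict Implicit. Unset Printing Implicit Defensive.
Import Order.TTheory GRing.Theory Num.Theory.
Local Open Scope ring_scope.

(* Index set [r] x [n] of the fixed basis of C^{rn}; columns of a matrix
   representing p are indexed by 'I_(cellN r n), and column c corresponds to
   the basis vector cell c = (i, j). *)
Definition cellN (r n : nat) : nat := #|{: 'I_r * 'I_n}|.
Definition cell {r n : nat} (c : 'I_(cellN r n)) : 'I_r * 'I_n := enum_val c.
Definition cell_idx {r n : nat} (ij : 'I_r * 'I_n) : 'I_(cellN r n) := enum_rank ij.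

Section Defs.
Variables (C : fieldType) (r n k : nat).
Local Notation N := (cellN r n).

(* Torus action: t multiplies the (i,j)-th coordinate by t_j.  A subspace p is
   the row space of A; t.p is the row space of A *m diag(t). *)
Definition torus_act (t : 'I_n -> C) (A : 'M[C]_(k, N)) : 'M[C]_(k, N) :=
  A *m diag_mx (\row_c t (cell c).2).

Definition pl_index (f : 'I_k -> 'I_N) : Prop := forall a b : 'I_k, (a < b)%N -> (f a < f b)%N.
Definition plucker (A : 'M[C]_(k, N)) (f : 'I_k -> 'I_N) : C := \det (colsub f A).

Definition orbit_exponents (A : 'M[C]_(k, N)) (e : 'I_n -> nat) : Prop :=
  exists f, pl_index f /\ exists c : C, c != 0 /\
    forall t : 'I_n -> C, (forall j, t j != 0) ->
      plucker (torus_act t A) f = c * \prod_(j < n) t j ^+ e j.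

(* W_j : the span of the r columns indexed by (i,j), i in [r], represented
   (mxalgebra style) by the r x k matrix whose rows are these columns. *)
Definition Wspace (A : 'M[C]_(k, N)) (j : 'I_n) : 'M[C]_(r, k) :=
  (colsub (fun i : 'I_r => cell_idx (i, j)) A)^T.

Definition polyrank (A : 'M[C]_(k, N)) (S : {set 'I_n}) : nat :=
  \rank (\sum_(j in S) <<Wspace A j>>)%MS.
End Defs.

Section Polytopes.
Variables (R : realFieldType) (n : nat).

Definition conv (X : 'rV[R]_n -> Prop) (x : 'rV[R]_n) : Prop :=
  exists (m : nat) (v : 'I_m -> 'rV[R]_n) (l : 'I_m -> R),
    (forall i, X (v i)) /\ (forall i, 0 <= l i) /\ \sum_i l i = 1 /\
    x = \sum_i l i *: v i.

Definition base_polytope (rk : {set 'I_n} -> nat) (x : 'rV[R]_n) : Prop :=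
  (forall j, 0 <= x 0 j) /\
  (forall U : {set 'I_n}, \sum_(j in U) x 0 j <= (rk U)%:R) /\
  \sum_(j < n) x 0 j = (rk setT)%:R.

Definition lattice_iso (P Q : 'rV[R]_n -> Prop) : Prop :=
  exists (M : 'M[int]_n) (b : 'rV[int]_n), M \in unitmx /\
    forall y, Q y <-> exists x, P x /\ y = x *m map_mx intr M + map_mx intr b.
End Polytopes.

(* The lattice polytope of the projective toric variety closure(T p):
   convex hull of the exponent vectors of the parameterizing monomials. *)
Definition toric_polytope (R : realFieldType) (C : fieldType) (r n k : nat)
  (A : 'M[C]_(k, cellN r n)) : 'rV[R]_n -> Prop :=
  conv (fun x => exists e, orbit_exponents A e /\ x = \row_j (e j)%:R).
Arguments toric_polytope R {C r n k} A _.
Arguments base_polytope R {n} rk x.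

(* A Pluecker coordinate of t.p is the corresponding coordinate of p times
   t^e, where e_j counts the chosen columns lying in block j; so the vertices
   of the toric polytope are the block-count vectors e_S of the column bases S
   of A, and the lattice isomorphism can be taken to be the identity.
   Rado's theorem for the column matroid of A identifies the vectors e_S with
   the integral points of the base polytope of polyrank A.  Finally, the base
   polytope of any integer submodular function is the convex hull of its
   integral points: if two support coordinates i, j of x are separated by no
   tight set, x can be moved both ways along e_i - e_j inside the polytope,
   each time gaining a tight set or a zero coordinate; otherwise every
   coordinate x_i is a difference of two ranks. *)

From HB Require Import structures.
From mathcomp Require Import all_boot all_order all_algebra.
From mathcomp Require Import reals.
From mathcomp Require Import complex.
From mathcomp Require Import zify ring lra.
Set Implicit Arguments. Unset Strict Implicit. Unset Printing Implicit Defensive.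
Import Order.TTheory GRing.Theory Num.Theory.

Lemma big_setUI (V : Type) (idx : V) (op : Monoid.com_law idx) (I : finType)
    (A B : {set I}) (F : I -> V) :
  op (\big[op/idx]_(i in A :|: B) F i) (\big[op/idx]_(i in A :&: B) F i) =
  op (\big[op/idx]_(i in A) F i) (\big[op/idx]_(i in B) F i).
Proof.
rewrite (big_setID (A := A :|: B) A) setUK setDUl setDv set0U (big_setID (A := B) A) setIC.
by rewrite Monoid.mulmAC -Monoid.mulmA.
Qed.

Lemma sum_indicator (I : finType) (A : {set I}) i : \sum_(l in A) (l == i) = (i \in A) :> nat.
Proof.
have [iA|iA] := boolP (i \in A).
  by rewrite (big_setD1 i) //= eqxx big1 // => l; rewrite !inE => /andP[/negbTE ->].
by rewrite big1 // => l; case: eqP => // ->; rewrite (negbTE iA).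
Qed.

Lemma finset_ind (T : finType) (P : {set T} -> Prop) :
  P set0 -> (forall (c : T) (A : {set T}), c \notin A -> P A -> P (c |: A)) -> forall A, P A.
Proof.
move=> P0 PU A; have [m] := ubnP #|A|; elim: m A => // m IH A.
have [-> _|[c cA]] := set_0Vmem A; first exact: P0.
rewrite ltnS (cardsD1 c) cA => le_m.
by rewrite -(setD1K cA); apply: PU; [rewrite !inE eqxx | exact: IH].
Qed.

Section Matroid.
Variables (T : finType) (rho : {set T} -> nat).
Implicit Types (A B : {set T}) (c : T).
Hypothesis rho_set0 : rho set0 = 0.
Hypothesis rho_mono : forall A B, A \subset B -> rho A <= rho B.
Hypothesis rho_submod : forall A B, rho (A :|: B) + rho (A :&: B) <= rho A + rho B.
Hypothesis rho_setU1 : forall c A, rho (c |: A) <= (rho A).+1.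

Lemma rank_setU_card A B : rho (A :|: B) <= rho A + #|B|.
Proof.
elim/finset_ind: B => [|c B cB IH]; first by rewrite setU0 cards0 addn0.
by rewrite cardsU1 cB setUCA; apply: leq_trans (rho_setU1 _ _) _; rewrite addnS ltnS.
Qed.

Lemma indep_subset A B : rho A = #|A| -> B \subset A -> rho B = #|B|.
Proof.
move=> indepA BA; have := rank_setU_card (A :&: B) (A :\: B).
rewrite setID indepA -(cardsID B A) (setIidPr BA).
by have := rank_setU_card set0 B; rewrite set0U rho_set0; lia.
Qed.

Lemma rank_setU1_subset c A B : B \subset A -> rho (c |: A) + rho B <= rho (c |: B) + rho A.
Proof.
move=> BA; have := rho_submod (c |: B) A; rewrite -setUA (setUidPr BA).
have := rho_mono (_ : B \subset (c |: B) :&: A); rewrite subsetI subsetUr BA => /(_ isT).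
lia.
Qed.

Lemma rank_closure A B :
  (forall c, c \in B -> rho (c |: A) <= rho A) -> rho (A :|: B) <= rho A.
Proof.
elim/finset_ind: B => [|c B _ IH] closed; first by rewrite setU0.
have {}IH : rho (A :|: B) <= rho A by apply: IH => d dB; apply: closed; rewrite !inE dB orbT.
have := rank_setU1_subset c (subsetUl A B); have := closed c (setU11 c B).
by rewrite setUCA; lia.
Qed.

Variables (I : finType) (g : T -> I).
Implicit Types (S X : {set T}) (U V : {set I}) (y : I -> nat).

Definition fiber_count S l := \sum_(c in S) (g c == l).

Lemma sum_fiber_count S U : \sum_(l in U) fiber_count S l = #|S :&: g @^-1: U|.
Proof.
rewrite exchange_big /=; transitivity (\sum_(c in S) (g c \in U)).
  by apply: eq_bigr => c _; rewrite -sum_indicator; apply: eq_bigr => l _; rewrite eq_sym.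
rewrite -sum1_card big_mkcond [RHS]big_mkcond; apply: eq_bigr => c _.
by rewrite !inE; case: (c \in S).
Qed.

Lemma fiber_count_setU1 c S l :
  c \notin S -> fiber_count (c |: S) l = (g c == l) + fiber_count S l.
Proof. exact: big_setU1. Qed.

(* Rado's condition for extending the independent set S by a family with
   y l elements in the fiber over l. *)
Definition rado_condition S y :=
  forall U, \sum_(l in U) y l + #|S| <= rho (S :|: g @^-1: U).

Definition rado_tight S y U := \sum_(l in U) y l + #|S| == rho (S :|: g @^-1: U).

Lemma rado_tight_setU S y U V : rado_condition S y ->
  rado_tight S y U -> rado_tight S y V -> rado_tight S y (U :|: V).
Proof.
move=> cond /eqP tU /eqP tV; apply/eqP.
have := rho_submod (S :|: g @^-1: U) (S :|: g @^-1: V).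
rewrite setUACA setUid -preimsetU -setUIr -preimsetI -tU -tV.
have : \sum_(l in U :|: V) y l + \sum_(l in U :&: V) y l =
       \sum_(l in U) y l + \sum_(l in V) y l by exact: big_setUI.
have := cond (U :|: V); have := cond (U :&: V).
lia.
Qed.

Lemma rado_tight_max S y j : rho S = #|S| -> rado_condition S y ->
  exists U, [/\ j \notin U, rado_tight S y U &
                forall V, j \notin V -> rado_tight S y V -> V \subset U].
Proof.
move=> indepS cond; pose P V := (j \notin V) && rado_tight S y V.
exists (\bigcup_(V | P V) V).
have /andP[jU tU] : P (\bigcup_(V | P V) V).
  apply: (big_ind P) => [|U V /andP[jU tU] /andP[jV tV]|//].
    by rewrite /P /rado_tight in_set0 big_set0 preimset0 setU0 indepS add0n eqxx.
  by rewrite /P inE negb_or jU jV rado_tight_setU.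
by split=> // V jV tV; apply: bigcup_sup; rewrite /P jV.
Qed.

(* If no element of the fiber over j raised the rank of X = S :|: g @^-1: U,
   then X would span that fiber, and tightness of U would make Rado's
   condition fail for j |: U. *)
Lemma rado_free_element S y j U : rado_condition S y -> 0 < y j ->
  j \notin U -> rado_tight S y U ->
  exists2 c, g c = j & rho (c |: (S :|: g @^-1: U)) = (rho (S :|: g @^-1: U)).+1.
Proof.
move=> cond yj jU /eqP tU; set X := S :|: g @^-1: U.
have [c /andP[/eqP gc /eqP free]|none] :=
  pickP (fun c => (g c == j) && (rho (c |: X) == (rho X).+1)); first by exists c.
have closed c : c \in g @^-1: [set j] -> rho (c |: X) <= rho X.
  rewrite !inE => gc; have := rho_setU1 c X; have := none c; rewrite gc /=.
  by move/eqP; lia.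
have := rank_closure closed.
have -> : X :|: g @^-1: [set j] = S :|: g @^-1: (j |: U).
  by rewrite /X -setUA -preimsetU [U :|: _]setUC.
by have := cond (j |: U); rewrite big_setU1 //= /X; lia.
Qed.

Lemma rado_step S y j : rho S = #|S| -> rado_condition S (fun l => y l + (l == j)) ->
  exists2 c, g c = j & [/\ c \notin S, rho (c |: S) = #|c |: S| & rado_condition (c |: S) y].
Proof.
move=> indepS cond.
have [U [jU tU U_max]] := rado_tight_max j indepS cond.
have yj : 0 < y j + (j == j) by rewrite eqxx addn1.
have [c gc free] := rado_free_element cond yj jU tU.
have free_sub B : B \subset S :|: g @^-1: U -> rho (c |: B) = (rho B).+1.
  move=> BX; have := rank_setU1_subset c BX; have := rho_setU1 c B; lia.
have cS : c \notin S.
  apply/negP => cS; have := free_sub S (subsetUl _ _).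
  by rewrite (setUidPr (_ : [set c] \subset S)) ?sub1set //; lia.
have indep_cS : rho (c |: S) = #|c |: S| by rewrite free_sub ?subsetUl // cardsU1 cS indepS.
exists c => //; split=> // V; rewrite cardsU1 cS /=.
have := cond V; rewrite big_split /= sum_indicator.
(* If j is in V, then c is already in the fiber; a tight V avoiding j lies in
   U, over which c is free; any other V has slack to spare. *)
case jV: (j \in V).
  have -> // : (c |: S) :|: g @^-1: V = S :|: g @^-1: V.
    by rewrite -setUA (setUidPr (_ : [set c] \subset _)) // sub1set !inE gc jV orbT.
  lia.
have [tV|ntV] := boolP (rado_tight S (fun l => y l + (l == j)) V).
  rewrite -setUA free_sub; last by rewrite setUS // preimsetS // U_max ?jV.
  by move/eqP: tV; rewrite big_split /= sum_indicator jV; lia.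
have := rho_mono (_ : S :|: g @^-1: V \subset (c |: S) :|: g @^-1: V).
move/eqP: ntV; rewrite big_split /= sum_indicator jV setSU ?subsetUr //.
lia.
Qed.

Lemma rado_extend S y : rho S = #|S| -> rado_condition S y ->
  exists S', [/\ S \subset S', rho S' = #|S'| &
                 forall l, fiber_count S' l = fiber_count S l + y l].
Proof.
have [m] := ubnP (\sum_l y l); elim: m S y => // m IH S y; rewrite ltnS => sum_y indepS cond.
have [j yj|y0] := pickP (fun l => 0 < y l); last first.
  by exists S; split=> // l; have := y0 l; rewrite lt0n => /negbFE/eqP ->; rewrite addn0.
pose y' l := y l - (l == j).
have yE l : y l = y' l + (l == j) by rewrite subnK //; case: eqP => // ->.
have cond' : rado_condition S (fun l => y' l + (l == j)).
  by move=> V; rewrite -(eq_bigr _ (fun l _ => yE l)); exact: cond.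
have [c gc [cS indep_cS cond_cS]] := rado_step indepS cond'.
have sum_y' : \sum_l y' l < m.
  have one_j : \sum_l (l == j) = 1 by rewrite (bigD1 j) //= eqxx big1 // => l /negbTE ->.
  by move: sum_y; rewrite (eq_bigr _ (fun l _ => yE l)) big_split /= one_j addn1.
have [S' [sub' indep' count']] := IH _ _ sum_y' indep_cS cond_cS.
exists S'; split=> //; first exact: subset_trans (subsetUr [set c] S) sub'.
by move=> l; rewrite count' fiber_count_setU1 // gc (yE l) eq_sym; lia.
Qed.

Theorem rado y : (forall U, \sum_(l in U) y l <= rho (g @^-1: U)) ->
  exists S, rho S = #|S| /\ forall l, fiber_count S l = y l.
Proof.
move=> cond; have [||S [_ indepS count]] := @rado_extend set0 y; rewrite ?rho_set0 ?cards0 //.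
  by move=> U; rewrite cards0 addn0 set0U; exact: cond.
by exists S; split=> // l; rewrite count /fiber_count big_set0.
Qed.

End Matroid.

Local Open Scope ring_scope.

Section Convexity.
Variables (R : realFieldType) (n : nat).
Implicit Types (X Y : 'rV[R]_n -> Prop) (x : 'rV[R]_n).

Lemma conv_mem X x : X x -> conv X x.
Proof.
move=> Xx; exists 1%N, (fun=> x), (fun=> 1).
by rewrite !big_ord1 scale1r; split=> // _; exact: ler01.
Qed.

Lemma conv_convex X x1 x2 a b : conv X x1 -> conv X x2 ->
  0 <= a -> 0 <= b -> a + b = 1 -> conv X (a *: x1 + b *: x2).
Proof.
case=> m1 [v1 [l1 [Xv1 [l1_ge0 [l1_sum ->]]]]] [m2 [v2 [l2 [Xv2 [l2_ge0 [l2_sum ->]]]]]].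
move=> a_ge0 b_ge0 ab1.
have splitl i : split (lshift m2 i) = inl i by exact: (unsplitK (inl i)).
have splitr i : split (rshift m1 i) = inr i by exact: (unsplitK (inr i)).
exists (m1 + m2)%N, (fun i => match split i with inl i1 => v1 i1 | inr i2 => v2 i2 end),
  (fun i => match split i with inl i1 => a * l1 i1 | inr i2 => b * l2 i2 end).
split; [by move=> i; case: split | split; [|split]].
- by move=> i; case: split => i'; apply: mulr_ge0.
- rewrite big_split_ord /=.
  under eq_bigr do rewrite splitl.
  under [X in _ + X]eq_bigr do rewrite splitr.
  by rewrite -!mulr_sumr l1_sum l2_sum !mulr1.
- rewrite big_split_ord /= !scaler_sumr.
  under [X in _ = X + _]eq_bigr do rewrite splitl -scalerA.
  by under [X in _ = _ + X]eq_bigr do rewrite splitr -scalerA.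
Qed.

Lemma eq_conv X Y : (forall x, X x <-> Y x) -> forall x, conv X x <-> conv Y x.
Proof.
move=> XY x; split=> -[m [v [l [Xv rest]]]]; exists m, v, l; split=> // i; exact/XY.
Qed.

End Convexity.

Section BasePolytope.
Variables (R : realFieldType) (n : nat) (rk : {set 'I_n} -> nat).
Implicit Types (x y : 'rV[R]_n) (U V : {set 'I_n}).
Local Notation base := (base_polytope R rk).

Definition wsum x U := \sum_(j in U) x 0 j.
Definition tight x U := wsum x U == (rk U)%:R.
Definition slack x U := (rk U)%:R - wsum x U.

Lemma wsumT x : \sum_(j < n) x 0 j = wsum x setT.
Proof. by apply: eq_bigl => j; rewrite in_setT. Qed.

Lemma wsumUI x U V : wsum x (U :|: V) + wsum x (U :&: V) = wsum x U + wsum x V.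
Proof. exact: big_setUI. Qed.

Lemma wsumD x y U : wsum (x + y) U = wsum x U + wsum y U.
Proof. by rewrite /wsum -big_split; apply: eq_bigr => j _; rewrite mxE. Qed.

Lemma wsumZ a x U : wsum (a *: x) U = a * wsum x U.
Proof. by rewrite /wsum mulr_sumr; apply: eq_bigr => j _; rewrite mxE. Qed.

Lemma wsum_sum m (l : 'I_m -> R) (v : 'I_m -> 'rV[R]_n) U :
  wsum (\sum_i l i *: v i) U = \sum_i l i * wsum (v i) U.
Proof.
rewrite /wsum (eq_bigr (fun j => \sum_i l i * v i 0 j)) => [|j _].
  by rewrite exchange_big; apply: eq_bigr => i _; rewrite mulr_sumr.
by rewrite summxE; apply: eq_bigr => i _; rewrite mxE.
Qed.

Lemma base_nat_row (e : 'I_n -> nat) :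
  base (\row_j (e j)%:R) <-> (forall U, \sum_(j in U) e j <= rk U)%N /\ \sum_j e j = rk setT.
Proof.
have wsum_row U : wsum (\row_j (e j)%:R) U = (\sum_(j in U) e j)%:R.
  by rewrite natr_sum; apply: eq_bigr => j _; rewrite mxE.
have sum_row : \sum_(j < n) (\row_j (e j)%:R : 'rV[R]_n) 0 j = (\sum_j e j)%:R.
  by rewrite natr_sum; apply: eq_bigr => j _; rewrite mxE.
rewrite /base_polytope sum_row; split=> [[_ [le_rk /eqP]]|[le_rk ->]].
  rewrite eqr_nat => /eqP sum_rk; split=> // U.
  by rewrite -(ler_nat R) -wsum_row; exact: le_rk.
by split=> [j|]; [rewrite mxE ler0n | split=> // U; rewrite -/(wsum _ U) wsum_row ler_nat].
Qed.

Lemma conv_base (X : 'rV[R]_n -> Prop) x : (forall y, X y -> base y) -> conv X x -> base x.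
Proof.
move=> XB [m [v [l [Xv [l_ge0 [l_sum ->]]]]]].
have vB i := XB _ (Xv i).
split; [|split].
- move=> j; rewrite summxE; apply: sumr_ge0 => i _; rewrite mxE.
  by apply: mulr_ge0 => //; case: (vB i).
- move=> U; rewrite -/(wsum _ U) wsum_sum.
  apply: le_trans (_ : \sum_i l i * (rk U)%:R <= _); last by rewrite -mulr_suml l_sum mul1r.
  by apply: ler_sum => i _; apply: ler_wpM2l => //; case: (vB i) => _ [le_rk _]; exact: le_rk.
- rewrite wsumT wsum_sum (eq_bigr (fun i => l i * (rk setT)%:R)) => [|i _].
    by rewrite -mulr_suml l_sum mul1r.
  by case: (vB i) => _ [_]; rewrite wsumT => ->.
Qed.

Hypothesis rk_set0 : rk set0 = 0%N.
Hypothesis rk_submod : forall U V, (rk (U :|: V) + rk (U :&: V) <= rk U + rk V)%N.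

Lemma tight_setUI x U V : base x -> tight x U -> tight x V ->
  tight x (U :|: V) && tight x (U :&: V).
Proof.
case=> _ [le_rk _] /eqP tU /eqP tV.
have := le_rk (U :|: V); have := le_rk (U :&: V); have := wsumUI x U V.
have : (rk (U :|: V))%:R + (rk (U :&: V))%:R <= (rk U)%:R + (rk V)%:R :> R.
  by rewrite -!natrD ler_nat.
by rewrite -!/(wsum _ _) /tight; lra.
Qed.

Lemma tight_bigcup x (P : pred {set 'I_n}) : base x ->
  (forall U, P U -> tight x U) -> tight x (\bigcup_(U | P U) U).
Proof.
move=> xB tP; apply: (big_ind (tight x)) => //; first by rewrite /tight /wsum big_set0 rk_set0.
by move=> U V tU tV; case/andP: (tight_setUI xB tU tV).
Qed.

Lemma tight_bigcap x (P : pred {set 'I_n}) : base x ->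
  (forall U, P U -> tight x U) -> tight x (\bigcap_(U | P U) U).
Proof.
move=> xB tP; apply: (big_ind (tight x)) => //.
  by case: xB => _ [_]; rewrite /tight -wsumT => ->.
by move=> U V tU tV; case/andP: (tight_setUI xB tU tV).
Qed.

Definition separated x := [forall i, forall j, [&& i != j, 0 < x 0 i & 0 < x 0 j] ==>
  [exists U, tight x U && ((i \in U) != (j \in U))]].

(* For i in the support, take the least tight set T containing i and the largest
   tight set S inside T avoiding i: separation leaves i as the only support
   point of T :\: S, so x_i = rk T - rk S. *)
Lemma separated_nat x : base x -> separated x -> forall i, exists m : nat, x 0 i = m%:R.
Proof.
move=> xB /forallP sep i.
have x_ge0 : forall j, 0 <= x 0 j by case: xB.
have [->|xi_neq0] := eqVneq (x 0 i) 0; first by exists 0%N.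
have xi_gt0 : 0 < x 0 i by rewrite lt_def xi_neq0 x_ge0.
pose T := \bigcap_(U | tight x U && (i \in U)) U.
pose S := \bigcup_(U | [&& tight x U, U \subset T & i \notin U]) U.
have tT : tight x T by apply: tight_bigcap => // U /andP[].
have tS : tight x S by apply: tight_bigcup => // U /and3P[].
have iT : i \in T by apply/bigcapP => U /andP[].
have iS : i \notin S by apply/bigcupP => -[U /and3P[_ _ /negP iU]].
have ST : S \subset T by apply/bigcupsP => U /and3P[].
have x_TS j : j \in T :\: S -> j != i -> x 0 j = 0.
  rewrite inE => /andP[jS jT] ji; apply/eqP; apply: contraR jS => xj_neq0.
  have xj_gt0 : 0 < x 0 j by rewrite lt_def xj_neq0 x_ge0.
  have ij_supp : [&& i != j, 0 < x 0 i & 0 < x 0 j] by rewrite eq_sym ji xi_gt0.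
  have /existsP[U /andP[tU]] := implyP (forallP (sep i) j) ij_supp.
  case iU: (i \in U); case jU: (j \in U) => //= _.
    have /subsetP/(_ j jT) : T \subset U by apply: bigcap_inf; rewrite tU iU.
    by rewrite jU.
  have tUT : tight x (U :&: T) by case/andP: (tight_setUI xB tU tT).
  have /subsetP : U :&: T \subset S.
    by apply: (bigcup_sup (U :&: T)); rewrite tUT subsetIr inE iU.
  by apply; rewrite inE jU.
have wsum_TS : wsum x T = wsum x S + x 0 i.
  rewrite /wsum (big_setID S) /= (setIidPr ST); congr (_ + _).
  rewrite (bigD1 i) /=; last by rewrite !inE iS iT.
  by rewrite big1 ?addr0 // => j /andP[jTS ji]; apply: x_TS.
move/eqP: tT; move/eqP: tS => tS tT.
have rkST : (rk S <= rk T)%N by rewrite -(ler_nat R) -tS -tT wsum_TS lerDl ltW.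
by exists (rk T - rk S)%N; rewrite natrB // -tS -tT wsum_TS addrC addKr.
Qed.

Definition edge_dir (i j : 'I_n) : 'rV[R]_n := \row_l ((l == i)%:R - (l == j)%:R).

Lemma wsum_edge_dir x s i j U :
  wsum (x + s *: edge_dir i j) U = wsum x U + s * ((i \in U)%:R - (j \in U)%:R).
Proof.
rewrite wsumD wsumZ -!(sum_indicator U) !natr_sum -sumrB; congr (_ + _ * _).
by apply: eq_bigr => l _; rewrite mxE.
Qed.

Lemma base_move x i j s : base x -> i != j -> 0 <= s <= x 0 j ->
  (forall U, i \in U -> j \notin U -> s <= slack x U) -> base (x + s *: edge_dir i j).
Proof.
case=> x_ge0 [le_rk sum_rk] ij /andP[s_ge0 s_le] s_slack.
split; [|split].
- move=> l; rewrite !mxE.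
  have [->|li] := eqVneq l i; first by rewrite (negbTE ij) subr0 mulr1 addr_ge0.
  have [->|lj] := eqVneq l j; first by rewrite sub0r mulrN1 subr_ge0.
  by rewrite subrr mulr0 addr0.
- move=> U; rewrite -/(wsum _ U) wsum_edge_dir.
  have := le_rk U; rewrite -/(wsum x U).
  case iU: (i \in U); case jU: (j \in U); rewrite /= ?subrr ?subr0 ?sub0r; try lra.
  by have := s_slack U iU (negbT jU); rewrite /slack; lra.
- by rewrite wsumT wsum_edge_dir !in_setT subrr mulr0 addr0 -wsumT.
Qed.

Definition degeneracy x := addn #|[set U | tight x U]| #|[set l | x 0 l == 0]|.

Lemma degeneracy_bound x : (degeneracy x <= #|{set 'I_n}| + n)%N.
Proof. by apply: leq_add; rewrite ?max_card // -[leqRHS]card_ord max_card. Qed.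

Lemma degeneracy_lt x y :
  (forall U, tight x U -> tight y U) -> (forall l, x 0 l = 0 -> y 0 l = 0) ->
  (exists U, tight y U && ~~ tight x U) \/ (exists l, (y 0 l == 0) && (x 0 l != 0)) ->
  (degeneracy x < degeneracy y)%N.
Proof.
move=> txy zxy new.
have sub_t : [set U | tight x U] \subset [set U | tight y U].
  by apply/subsetP => U; rewrite !inE; exact: txy.
have sub_z : [set l | x 0 l == 0] \subset [set l | y 0 l == 0].
  by apply/subsetP => l; rewrite !inE => /eqP /zxy ->.
have := subset_leq_card sub_t; have := subset_leq_card sub_z; rewrite /degeneracy.
case: new => [[U /andP[tyU txU]]|[l /andP[yl xl]]].
  have : [set U | tight x U] \proper [set U | tight y U].
    by apply/properP; split=> //; exists U; rewrite inE.
  by move/proper_card; lia.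
have : [set l | x 0 l == 0] \proper [set l | y 0 l == 0].
  by apply/properP; split=> //; exists l; rewrite inE.
by move/proper_card; lia.
Qed.

(* Move from x along e_i - e_j until either x_j vanishes or a set separating
   i from j becomes tight. *)
Lemma move_within_base x i j : base x -> i != j -> 0 < x 0 i -> 0 < x 0 j ->
  (forall U, tight x U -> (i \in U) = (j \in U)) ->
  exists2 s, 0 < s &
    base (x + s *: edge_dir i j) /\ (degeneracy x < degeneracy (x + s *: edge_dir i j))%N.
Proof.
move=> xB ij xi_gt0 xj_gt0 t_ij.
have slack_gt0 U : i \in U -> j \notin U -> 0 < slack x U.
  move=> iU jU; case: xB => _ [le_rk _]; rewrite subr_gt0 lt_def le_rk andbT.
  by apply: contraNneq jU => tU; rewrite -(t_ij U) // /tight tU.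
pose separates U := (i \in U) && (j \notin U).
have sep_i : separates [set i] by rewrite /separates !inE eqxx eq_sym.
have [U0 /andP[iU0 jU0] U0_min] := arg_minP (slack x) sep_i.
pose s := Num.min (x 0 j) (slack x U0).
exists s; first by rewrite lt_min xj_gt0 slack_gt0.
split.
  apply: base_move => //; first by rewrite ltW ?lt_min ?xj_gt0 ?slack_gt0 // ge_min lexx.
  by move=> U iU jU; rewrite ge_min U0_min ?orbT // /separates iU.
apply: degeneracy_lt.
- by move=> U tU; rewrite /tight wsum_edge_dir (t_ij U tU) subrr mulr0 addr0.
- move=> l xl; rewrite !mxE xl.
  have [li lj] : l != i /\ l != j.
    by split; apply/eqP => el; move/eqP: xl; rewrite el gt_eqF.
  by rewrite (negbTE li) (negbTE lj) subrr mulr0 addr0.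
- have [xj_le|slack_lt] := leP (x 0 j) (slack x U0).
    right; exists j; rewrite !mxE eqxx (eq_sym j) (negbTE ij) (gt_eqF xj_gt0) andbT /=.
    by rewrite /s (min_l xj_le) sub0r mulrN1 subrr.
  left; exists U0; apply/andP; split.
    rewrite /tight wsum_edge_dir iU0 (negbTE jU0) /s (min_r (ltW slack_lt)) /=.
    by rewrite /slack subr0 mulr1 addrC subrK.
  by apply: contraTN (slack_gt0 U0 iU0 jU0) => /eqP tU0; rewrite /slack tU0 subrr ltxx.
Qed.

Lemma base_integral_hull x :
  base x <-> conv (fun y => base y /\ exists e : 'I_n -> nat, y = \row_j (e j)%:R) x.
Proof.
split; last by apply: conv_base => y [].
move=> xB; have [m] := ubnP ((#|{set 'I_n}| + n).+1 - degeneracy x)%N.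
elim: m x xB => // m IH x xB; rewrite ltnS => deg_x.
have [sep|] := boolP (separated x).
  apply: conv_mem; split=> //; have /fin_all_exists[e xe] := separated_nat xB sep.
  by exists e; apply/rowP => j; rewrite mxE xe.
move/forallPn => [i /forallPn [j]]; rewrite negb_imply.
move=> /andP[/and3P[ij xi_gt0 xj_gt0] /existsPn nosep].
have t_ij U : tight x U -> (i \in U) = (j \in U).
  by move=> tU; have := nosep U; rewrite tU negbK => /eqP.
have [s1 s1_gt0 [y1B y1_deg]] := move_within_base xB ij xi_gt0 xj_gt0 t_ij.
have ji : j != i by rewrite eq_sym.
have [s2 s2_gt0 [y2B y2_deg]] :=
  move_within_base xB ji xj_gt0 xi_gt0 (fun U tU => esym (t_ij U tU)).
have y1_bd := degeneracy_bound (x + s1 *: edge_dir i j).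
have y2_bd := degeneracy_bound (x + s2 *: edge_dir j i).
have s12_neq0 : s1 + s2 != 0 by rewrite gt_eqF // addr_gt0.
have -> : x = (s2 / (s1 + s2)) *: (x + s1 *: edge_dir i j) +
              (s1 / (s1 + s2)) *: (x + s2 *: edge_dir j i).
  by apply/rowP => l; rewrite !mxE; field.
apply: conv_convex; [apply: IH => //; lia | apply: IH => //; lia | | | by field].
  all: by rewrite divr_ge0 ?ltW ?addr_gt0.
Qed.

End BasePolytope.

Section RowMatroid.
Variables (F : fieldType) (m k : nat) (B : 'M[F]_(m, k)).
Implicit Types (S : {set 'I_m}) (c : 'I_m).

Definition row_span S := (\sum_(c in S) <<row c B>>)%MS.
Definition row_rank S := \rank (row_span S).

Lemma row_spanS S S' : S \subset S' -> (row_span S <= row_span S')%MS.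
Proof.
move=> SS'; apply/sumsmx_subP => c cS.
by apply: (sumsmx_sup c); [exact: (subsetP SS') | exact: submx_refl].
Qed.

Lemma row_rank_set0 : row_rank set0 = 0%N.
Proof. by rewrite /row_rank /row_span big_set0 mxrank0. Qed.

Lemma row_rank_mono S S' : S \subset S' -> (row_rank S <= row_rank S')%N.
Proof. by move=> SS'; apply/mxrankS/row_spanS. Qed.

Lemma row_spanU S S' : (row_span (S :|: S') :=: row_span S + row_span S')%MS.
Proof.
apply/eqmxP/andP; split; last by rewrite addsmx_sub !row_spanS ?subsetUl ?subsetUr.
rewrite {1}/row_span; apply/sumsmx_subP => c; rewrite inE => /orP[cS|cS].
  by apply: submx_trans (addsmxSl _ _); apply: (sumsmx_sup c) => //; exact: submx_refl.
by apply: submx_trans (addsmxSr _ _); apply: (sumsmx_sup c) => //; exact: submx_refl.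
Qed.

Lemma row_rank_submod S S' :
  (row_rank (S :|: S') + row_rank (S :&: S') <= row_rank S + row_rank S')%N.
Proof.
rewrite /row_rank -(mxrank_sum_cap (row_span S) (row_span S')) (row_spanU S S') leq_add2l.
by apply: mxrankS; rewrite sub_capmx !row_spanS ?subsetIl ?subsetIr.
Qed.

Lemma row_rank_setU1 c S : (row_rank (c |: S) <= (row_rank S).+1)%N.
Proof.
have sub : (row_span (c |: S) <= <<row c B>> + row_span S)%MS.
  by rewrite (row_spanU [set c] S) addsmxS // /row_span big_set1.
apply: leq_trans (mxrankS sub) _; apply: leq_trans (mxrank_adds_leqif _ _).1 _.
by rewrite genmxE /row_rank; have := rank_leq_row (row c B); lia.
Qed.

Lemma row_rank_rowsub p (f : 'I_p -> 'I_m) : \rank (rowsub f B) = row_rank (f @: setT).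
Proof.
rewrite /row_rank /row_span; apply/eqmx_rank/andP; split.
  apply/row_subP => a; rewrite row_rowsub.
  by apply: (sumsmx_sup (f a)); [exact: imset_f | rewrite genmxE submx_refl].
apply/sumsmx_subP => _ /imsetP[a _ ->].
by rewrite genmxE -row_rowsub row_sub.
Qed.

Lemma row_rank_setT : row_rank setT = \rank B.
Proof.
rewrite -[setT]imset_id -row_rank_rowsub; congr (\rank _).
by apply/matrixP => i j; rewrite mxE.
Qed.

End RowMatroid.

Section Blocks.
Variables (C : fieldType) (r n k : nat).
Local Notation N := (cellN r n).
Implicit Types (A : 'M[C]_(k, N)) (f : 'I_k -> 'I_N).

Definition block (c : 'I_N) : 'I_n := (cell c).2.

Lemma cellK (ij : 'I_r * 'I_n) : cell (cell_idx ij : 'I_N) = ij.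
Proof. exact: enum_rankK. Qed.

Lemma cell_idxK (c : 'I_N) : cell_idx (cell c) = c.
Proof. exact: enum_valK. Qed.

Lemma polyrankE A U : polyrank A U = row_rank A^T (block @^-1: U).
Proof.
rewrite /polyrank /row_rank /row_span; apply/eqmx_rank/andP; split.
  apply/sumsmx_subP => j jU; rewrite genmxE; apply/row_subP => i.
  have -> : row i (Wspace A j) = row (cell_idx (i, j)) A^T by apply/rowP => a; rewrite !mxE.
  by apply: (sumsmx_sup (cell_idx (i, j))); [rewrite inE /block cellK | rewrite genmxE].
apply/sumsmx_subP => c; rewrite inE => cU; apply: (sumsmx_sup (block c)) => //.
have -> : row c A^T = row (cell c).1 (Wspace A (block c)).
  by apply/rowP => a; rewrite !mxE /block -surjective_pairing cell_idxK.
by rewrite !genmxE row_sub.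
Qed.

Definition block_count f j := #|[set a | block (f a) == j]|.

Lemma plucker_torus_act A f (t : 'I_n -> C) :
  plucker (torus_act t A) f = plucker A f * \prod_(j < n) t j ^+ block_count f j.
Proof.
rewrite /plucker /torus_act.
have -> : colsub f (A *m diag_mx (\row_c t (cell c).2)) =
          colsub f A *m diag_mx (\row_a t (block (f a))).
  by apply/matrixP => i a; rewrite !mul_mx_diag !mxE.
rewrite det_mulmx det_diag; congr (_ * _).
rewrite (eq_bigr (fun a => t (block (f a)))) => [|a _]; last by rewrite mxE.
rewrite (partition_big (fun a => block (f a)) xpredT) //=; apply: eq_bigr => j _.
rewrite (eq_bigr (fun _ => t j)) => [|a /eqP <-] //.
by rewrite prodr_const /block_count cardsE.
Qed.

Lemma block_count_image f : injective f -> block_count f =1 fiber_count block (f @: setT).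
Proof.
move=> finj j; rewrite /fiber_count big_imset /=; last by move=> a b _ _; exact: finj.
rewrite /block_count -sum1dep_card big_mkcond [RHS]big_mkcond.
by apply: eq_bigr => a _; rewrite in_setT.
Qed.

Lemma plucker_neq0 A f : (plucker A f != 0) = (row_rank A^T (f @: setT) == k).
Proof.
rewrite /plucker -row_rank_rowsub -trmx_mxsub mxrank_tr.
by rewrite -unitfE -unitmxE -row_free_unit.
Qed.

Lemma pl_index_inj f : pl_index f -> injective f.
Proof.
move=> incr a b fab; apply: val_inj; have [ab|ba|//] := ltngtP a b.
  by have := incr a b ab; rewrite fab ltnn.
by have := incr b a ba; rewrite fab ltnn.
Qed.

Lemma pl_index_enum (S : {set 'I_N}) :
  #|S| = k -> exists2 f : 'I_k -> 'I_N, pl_index f & f @: setT = S.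
Proof.
move=> cardS; pose f (a : 'I_k) : 'I_N := Order.enum_val (cast_ord (esym cardS) a).
have f_incr : pl_index f.
  move=> a b ab; have mono := leW_mono (@Order.le_enum_val _ _ (@le_total _ _) (mem S)).
  by have := mono (cast_ord (esym cardS) a) (cast_ord (esym cardS) b); rewrite !ltEord => ->.
exists f => //; apply/eqP; rewrite eqEcard; apply/andP; split.
  by apply/subsetP => _ /imsetP[a _ ->]; exact: Order.enum_valP.
by rewrite card_imset ?cardsT ?card_ord ?cardS //; exact: pl_index_inj.
Qed.

End Blocks.
Arguments block {r n} c.

Section ColumnBases.
Variables (C : fieldType) (r n k : nat) (A : 'M[C]_(k, cellN r n)).
Implicit Types (f : 'I_k -> 'I_(cellN r n)) (U V : {set 'I_n}).

Lemma polyrank_set0 : polyrank A set0 = 0%N.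
Proof. by rewrite polyrankE preimset0 row_rank_set0. Qed.

Lemma polyrank_submod U V :
  (polyrank A (U :|: V) + polyrank A (U :&: V) <= polyrank A U + polyrank A V)%N.
Proof. by rewrite !polyrankE preimsetU preimsetI row_rank_submod. Qed.

Hypothesis rankA : \rank A = k.

Lemma polyrank_setT : polyrank A setT = k.
Proof. by rewrite polyrankE preimsetT row_rank_setT mxrank_tr rankA. Qed.

Lemma block_count_basisP (e : 'I_n -> nat) :
  (exists2 f, pl_index f & plucker A f != 0 /\ e =1 block_count f) <->
  (forall U, \sum_(j in U) e j <= polyrank A U)%N /\ \sum_j e j = polyrank A setT.
Proof.
have sum_setT (S : {set 'I_(cellN r n)}) : \sum_j fiber_count block S j = #|S|.
  have := sum_fiber_count block S setT; rewrite preimsetT setIT => <-.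
  by apply: eq_bigl => j; rewrite in_setT.
split=> [[f f_incr [+ e_count]]|[le_rk sum_rk]].
  rewrite plucker_neq0 => /eqP indep.
  have f_inj := pl_index_inj f_incr; set S := f @: setT.
  have cardS : #|S| = k by rewrite card_imset // cardsT card_ord.
  have indepS : row_rank A^T S = #|S| by rewrite indep cardS.
  have e_fiber j : e j = fiber_count block S j by rewrite e_count block_count_image.
  split=> [U|]; last by rewrite polyrank_setT -cardS -sum_setT; apply: eq_bigr.
  rewrite (eq_bigr _ (fun j _ => e_fiber j)) sum_fiber_count polyrankE.
  rewrite -(indep_subset (row_rank_set0 _) (row_rank_setU1 _) indepS (subsetIl _ _)).
  exact/row_rank_mono/subsetIr.
have [|S [indepS countS]] := rado (row_rank_set0 A^T) (@row_rank_mono _ _ _ A^T)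
  (row_rank_submod A^T) (row_rank_setU1 A^T) (g := block) (y := e).
  by move=> U; rewrite -polyrankE.
have cardS : #|S| = k.
  by rewrite -polyrank_setT -sum_rk -sum_setT; apply: eq_bigr => j _; rewrite countS.
have [f f_incr fS] := pl_index_enum cardS.
exists f => //; split; first by rewrite plucker_neq0 fS indepS cardS.
by move=> j; rewrite block_count_image ?fS ?countS //; exact: pl_index_inj.
Qed.

End ColumnBases.

Section OrbitExponents.
Variables (C : numFieldType) (r n k : nat) (A : 'M[C]_(k, cellN r n)).

Lemma orbit_exponentsP e : orbit_exponents A e <->
  exists2 f, pl_index f & plucker A f != 0 /\ e =1 block_count f.
Proof.
split=> [[f [f_incr [c [c_neq0 orbit]]]]|[f f_incr [pl_neq0 e_count]]]; last first.
  exists f; split=> //; exists (plucker A f); split=> // t _.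
  by rewrite plucker_torus_act; congr (_ * _); apply: eq_bigr => j _; rewrite e_count.
have pl_c : plucker A f = c.
  have := orbit (fun=> 1) (fun=> oner_neq0 _).
  by rewrite plucker_torus_act !big1 ?mulr1 // => j _; rewrite expr1n.
exists f => //; split=> [|j]; first by rewrite pl_c.
pose t l : C := if l == j then 2 else 1.
have t_neq0 l : t l != 0 by rewrite /t; case: ifP; rewrite ?pnatr_eq0 ?oner_neq0.
have prod_t (m : 'I_n -> nat) : \prod_(l < n) t l ^+ m l = 2 ^+ m j.
  by rewrite (bigD1 j) //= /t eqxx big1 ?mulr1 // => l /negbTE ->; rewrite expr1n.
have := orbit t t_neq0; rewrite plucker_torus_act !prod_t pl_c => /(mulfI c_neq0) /eqP.
by rewrite -!natrX eqr_nat eqn_exp2l // => /eqP.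
Qed.

End OrbitExponents.

Lemma orbit_exponents_base (R : realFieldType) (C : numFieldType) r n k
    (A : 'M[C]_(k, cellN r n)) e :
  \rank A = k ->
  orbit_exponents A e <-> base_polytope R (polyrank A) (\row_j (e j)%:R).
Proof. by move=> rankA; rewrite base_nat_row orbit_exponentsP; exact: block_count_basisP. Qed.

Lemma lattice_iso_eq (R : realFieldType) n (P Q : 'rV[R]_n -> Prop) :
  (forall x, P x <-> Q x) -> lattice_iso P Q.
Proof.
move=> PQ; exists 1%:M, 0; split=> [|y]; first exact: unitmx1.
rewrite map_mx1 map_mx0; split=> [/PQ Py|[x [/PQ Qx ->]]]; last by rewrite mulmx1 addr0.
by exists y; rewrite mulmx1 addr0.
Qed.

Theorem theorem7p4 (R : realType) (r n k : nat) :
  (0 < r)%N -> (0 < n)%N -> (0 < k)%N ->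
  forall A : 'M[R[i]]_(k, cellN r n), \rank A = k ->
  lattice_iso (toric_polytope R A) (base_polytope R (polyrank A)).
Proof.
move=> _ _ _ A rankA; apply: lattice_iso_eq => x; apply: iff_sym.
rewrite (base_integral_hull (polyrank_set0 A) (polyrank_submod A)).
apply: eq_conv => y; split=> [[yB [e ye]]|[e [orb_e ye]]].
  by exists e; split=> //; apply/(orbit_exponents_base R e rankA); rewrite -ye.
by split; [rewrite ye -(orbit_exponents_base R e rankA) | exists e].
Qed.
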